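(* Let $X$ be a topological space in which every open set is a union of countably many clopen sets, and let $\alpha$ be an ordinal with $0<\alpha\le\omega_1$. The following are equivalent: (1) for every function $\Psi:X\to\mathbb{N}^{\mathbb{N}}$ of Baire class $\alpha$, $\Psi[X]$ is bounded; (2) for every Borel function $\Psi:X\to\mathbb{N}^{\mathbb{N}}$, $\Psi[X]$ is bounded.
   Context: Functions $X\to\mathbb{N}^{\mathbb{N}}$ of Baire class $0$ are the continuous ones; for $0<\alpha\le\omega_1$, a function is of Baire class $\alpha$ if it is the pointwise limit of a sequence of functions each of Baire class smaller than $\alpha$. The Baire class $1$ functions are exactly those for which the preimage of every open set is $F_\sigma$, and the Borel functions are exactly those of Baire class $\omega_1$. $Y\subseteq\mathbb{N}^{\mathbb{N}}$ is bounded if there is $g\in\mathbb{N}^{\mathbb{N}}$ such that each $f\in Y$ satisfies $f(n)\le g(n)$ for all but finitely many $n$. *)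

From Stdlib Require Import Classical.

Set Implicit Arguments.

Record topology (X : Type) := Topology {
  is_open : (X -> Prop) -> Prop;
  open_full : is_open (fun _ => True);
  open_inter : forall U V, is_open U -> is_open V -> is_open (fun x => U x /\ V x);
  open_union : forall (I : Type) (F : I -> X -> Prop),
      (forall i, is_open (F i)) -> is_open (fun x => exists i, F i x)
}.

Definition is_clopen (X : Type) (T : topology X) (U : X -> Prop) : Prop :=
  is_open T U /\ is_open T (fun x => ~ U x).

Definition open_countable_union_clopen (X : Type) (T : topology X) : Prop :=
  forall U, is_open T U ->
    exists C : nat -> X -> Prop,
      (forall n, is_clopen T (C n)) /\ (forall x, U x <-> exists n, C n x).

Definition baire := nat -> nat.

Definition agree_upto (k : nat) (g h : baire) : Prop :=
  forall i, i < k -> g i = h i.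

Definition baire_open (U : baire -> Prop) : Prop :=
  forall g, U g -> exists k, forall h, agree_upto k g h -> U h.

Definition continuous (X : Type) (T : topology X) (f : X -> baire) : Prop :=
  forall U, baire_open U -> is_open T (fun x => U (f x)).

(** pointwise convergence in N^N (product of discrete N) *)
Definition converges_pointwise (X : Type) (g : nat -> X -> baire) (f : X -> baire)
  : Prop :=
  forall x k, exists N, forall n, N <= n -> g n x k = f x k.

(** * Countable ordinals as Brouwer trees; OL f denotes sup_n f n *)
Inductive Ord : Type :=
| OZ : Ord
| OS : Ord -> Ord
| OL : (nat -> Ord) -> Ord.

Inductive ole : Ord -> Ord -> Prop :=
| ole_Z : forall b, ole OZ b
| ole_S : forall a b, olt a b -> ole (OS a) b
| ole_L : forall f b, (forall n, ole (f n) b) -> ole (OL f) b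
with olt : Ord -> Ord -> Prop :=
| olt_S : forall a b, ole a b -> olt a (OS b)
| olt_L : forall a f n, olt a (f n) -> olt a (OL f).

(** ordinals alpha with alpha <= omega_1: a countable one, or omega_1 itself *)
Inductive OrdW1 : Type :=
| Ctbl : Ord -> OrdW1
| Omega1 : OrdW1.

Definition ordW1_pos (a : OrdW1) : Prop :=
  match a with Ctbl b => olt OZ b | Omega1 => True end.

Inductive BaireClass (X : Type) (T : topology X) : Ord -> (X -> baire) -> Prop :=
| bc_zero : forall a f, ole a OZ -> continuous T f -> BaireClass T a f
| bc_lim : forall a f (b : nat -> Ord) (g : nat -> X -> baire),
    olt OZ a ->
    (forall n, olt (b n) a) ->
    (forall n, BaireClass T (b n) (g n)) ->
    converges_pointwise g f ->
    BaireClass T a f.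

Definition BaireClassW (X : Type) (T : topology X) (a : OrdW1) (f : X -> baire) : Prop :=
  match a with
  | Ctbl b => BaireClass T b f
  | Omega1 => exists (b : nat -> Ord) (g : nat -> X -> baire),
      (forall n, BaireClass T (b n) (g n)) /\ converges_pointwise g f
  end.

Inductive borel_set (X : Type) (T : topology X) : (X -> Prop) -> Prop :=
| borel_open : forall U, is_open T U -> borel_set T U
| borel_compl : forall U, borel_set T U -> borel_set T (fun x => ~ U x)
| borel_cunion : forall F : nat -> X -> Prop,
    (forall n, borel_set T (F n)) -> borel_set T (fun x => exists n, F n x)
| borel_ext : forall U V, borel_set T U -> (forall x, U x <-> V x) -> borel_set T V.

Definition borel_fun (X : Type) (T : topology X) (f : X -> baire) : Prop :=
  forall U, baire_open U -> borel_set T (fun x => U (f x)).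

Definition bounded (Y : baire -> Prop) : Prop :=
  exists g : baire, forall f, Y f -> exists N, forall n, N <= n -> f n <= g n.

Definition image (X : Type) (f : X -> baire) : baire -> Prop :=
  fun y => exists x, f x = y.

(* Every function of Baire class alpha is Borel, since its level sets
   {x | Psi x n = c} are Borel; this gives (2) -> (1).

   For (1) -> (2), hypothesis (1) bounds the image of every pointwise limit of
   continuous functions.  If E n j i are clopen sets and every x has, for each n, a
   witness j with x in the intersection over i of E n j i, then the least witness is
   such a limit: at stage i take the least j not yet refuted by E n j 0, ..., E n j (i-1).
   Hence the witnesses can be chosen eventually below a single g.  Applied with n
   coding pairs, this shows that the sets "union over m of intersection over i of
   clopen sets" are closed under complement; since open sets are countable unions of
   clopen sets, every Borel set has this form.  Writing each level set of a Borel Psi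
   in this form, the witnesses j coding (Psi x n, m) dominate Psi. *)

From Stdlib Require Import Classical ClassicalEpsilon FunctionalExtensionality PropExtensionality.
From Stdlib Require Import Arith Lia Cantor.

Set Implicit Arguments.

Section Clopen.

Variables (X : Type) (T : topology X).

Lemma open_ext (U V : X -> Prop) :
  is_open T U -> (forall x, U x <-> V x) -> is_open T V.
Proof.
  intros HU HUV.
  replace V with U; [exact HU|].
  apply functional_extensionality; intros x; apply propositional_extensionality, HUV.
Qed.

Lemma open_const (P : Prop) : is_open T (fun _ => P).
Proof.
  apply open_ext with (fun x => exists _ : P, True).
  - apply (open_union T (fun (_ : P) (_ : X) => True)); intros _; apply open_full.
  - intros x; split; [intros [p _]; exact p | intros p; now exists p].
Qed.

Lemma open_or (U V : X -> Prop) :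
  is_open T U -> is_open T V -> is_open T (fun x => U x \/ V x).
Proof.
  intros HU HV.
  apply open_ext with (fun x => exists b : bool, (if b then U else V) x).
  - apply open_union; intros [|]; assumption.
  - intros x; split.
    + intros [[|] Hx]; auto.
    + intros [Hx|Hx]; [exists true | exists false]; exact Hx.
Qed.

Lemma open_all_lt (O : nat -> X -> Prop) k :
  (forall i, is_open T (O i)) -> is_open T (fun x => forall i, i < k -> O i x).
Proof.
  intros HO; induction k as [|k IH].
  - apply open_ext with (fun _ => True); [apply open_full|].
    intros x; split; [intros _ i Hi; lia | trivial].
  - apply open_ext with (fun x => (forall i, i < k -> O i x) /\ O k x);
      [now apply open_inter|].
    intros x; split.
    + intros [Hlt Hk] i Hi.
      destruct (Nat.eq_dec i k) as [->|Hne]; [exact Hk | apply Hlt; lia].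
    + intros H; split; [intros i Hi|]; apply H; lia.
Qed.

Lemma clopen_ext (U V : X -> Prop) :
  is_clopen T U -> (forall x, U x <-> V x) -> is_clopen T V.
Proof.
  intros [HU HnU] HUV; split.
  - now apply open_ext with U.
  - apply open_ext with (fun x => ~ U x); [exact HnU|].
    intros x; now rewrite HUV.
Qed.

Lemma clopen_const (P : Prop) : is_clopen T (fun _ => P).
Proof. split; apply open_const. Qed.

Lemma clopen_compl (U : X -> Prop) : is_clopen T U -> is_clopen T (fun x => ~ U x).
Proof.
  intros [HU HnU]; split; [exact HnU|].
  apply open_ext with U; [exact HU|].
  intros x; split; [tauto | apply NNPP].
Qed.

Lemma clopen_or (U V : X -> Prop) :
  is_clopen T U -> is_clopen T V -> is_clopen T (fun x => U x \/ V x).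
Proof.
  intros [HU HnU] [HV HnV]; split.
  - now apply open_or.
  - apply open_ext with (fun x => ~ U x /\ ~ V x); [now apply open_inter|].
    intros x; tauto.
Qed.

Lemma clopen_and (U V : X -> Prop) :
  is_clopen T U -> is_clopen T V -> is_clopen T (fun x => U x /\ V x).
Proof.
  intros HU HV.
  apply clopen_ext with (fun x => ~ (~ U x \/ ~ V x)).
  - now apply clopen_compl, clopen_or; apply clopen_compl.
  - intros x; tauto.
Qed.

Lemma clopen_imp (U V : X -> Prop) :
  is_clopen T U -> is_clopen T V -> is_clopen T (fun x => U x -> V x).
Proof.
  intros HU HV.
  apply clopen_ext with (fun x => ~ U x \/ V x).
  - now apply clopen_or; [apply clopen_compl|].
  - intros x; tauto.
Qed.

Lemma clopen_ex_lt (C : nat -> X -> Prop) k :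
  (forall j, is_clopen T (C j)) -> is_clopen T (fun x => exists j, j < k /\ C j x).
Proof.
  intros HC; induction k as [|k IH].
  - apply clopen_ext with (fun _ => False); [apply clopen_const|].
    intros x; split; [easy | intros (j & Hj & _); lia].
  - apply clopen_ext with (fun x => (exists j, j < k /\ C j x) \/ C k x);
      [now apply clopen_or|].
    intros x; split.
    + intros [(j & Hj & HCj)|HCk]; [exists j | exists k]; split; auto; lia.
    + intros (j & Hj & HCj).
      destruct (Nat.eq_dec j k) as [->|Hne]; [now right | left; exists j; split; [lia|exact HCj]].
Qed.

Lemma clopen_all_lt (C : nat -> X -> Prop) k :
  (forall j, is_clopen T (C j)) -> is_clopen T (fun x => forall j, j < k -> C j x).
Proof.
  intros HC.
  apply clopen_ext with (fun x => ~ exists j, j < k /\ ~ C j x).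
  - now apply clopen_compl, clopen_ex_lt; intros j; apply clopen_compl.
  - intros x; split.
    + intros H j Hj; apply NNPP; intros HnC; apply H; now exists j.
    + intros H (j & Hj & HnC); exact (HnC (H j Hj)).
Qed.

Lemma continuous_of_open_levels (f : X -> baire) :
  (forall n c, is_open T (fun x => f x n = c)) -> continuous T f.
Proof.
  intros Hlev U HU.
  set (I := {p : X * nat | forall h, agree_upto (snd p) (f (fst p)) h -> U h}).
  set (near := fun (p : I) x =>
                 forall i, i < snd (proj1_sig p) -> f x i = f (fst (proj1_sig p)) i).
  apply open_ext with (fun x => exists p : I, near p x).
  - apply open_union; intros p; apply open_all_lt; intros i; apply Hlev.
  - intros x; split.
    + intros [[[x0 k] Hk] Hagree]; apply Hk; intros i Hi; symmetry; now apply Hagree.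
    + intros Hx; destruct (HU _ Hx) as [k Hk].
      now exists (exist _ (x, k) Hk).
Qed.

End Clopen.

Definition decide (P : Prop) : bool := if excluded_middle_informative P then true else false.

Lemma decide_true (P : Prop) : decide P = true <-> P.
Proof. unfold decide; destruct (excluded_middle_informative P); split; easy. Qed.

Lemma decide_false (P : Prop) : decide P = false <-> ~ P.
Proof. unfold decide; destruct (excluded_middle_informative P); split; easy. Qed.

Lemma classic_least (P : nat -> Prop) :
  (exists n, P n) -> exists n, P n /\ forall m, m < n -> ~ P m.
Proof.
  intros Hex.
  destruct (dec_inh_nat_subset_has_unique_least_element P (fun n => classic (P n)) Hex)
    as (n & [Hn Hleast] & _).
  exists n; split; [exact Hn|].
  intros m Hm HPm; specialize (Hleast m HPm); lia.
Qed.

Lemma eventually_all_below (P : nat -> nat -> Prop) k :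
  (forall j, j < k -> exists m, forall i, m <= i -> P j i) ->
  exists M, forall i, M <= i -> forall j, j < k -> P j i.
Proof.
  induction k as [|k IH]; intros Hev.
  - exists 0; intros i _ j Hj; lia.
  - destruct IH as [M HM]; [intros j Hj; apply Hev; lia|].
    destruct (Hev k) as [m Hm]; [lia|].
    exists (max M m); intros i Hi j Hj.
    destruct (Nat.eq_dec j k) as [->|Hne]; [apply Hm; lia | apply HM; lia].
Qed.

(* [first_true p i] is the least [j < i] with [p j = true], and [i] if there is none. *)
Fixpoint first_true (p : nat -> bool) (i : nat) : nat :=
  match i with
  | 0 => 0
  | S i' => if p 0 then 0 else S (first_true (fun j => p (S j)) i')
  end.

Lemma first_true_spec (p : nat -> bool) i c :
  first_true p i = c <->
  (c < i /\ p c = true \/ c = i) /\ forall j, j < c -> p j = false.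
Proof.
  revert p c; induction i as [|i IH]; intros p c; simpl.
  - split.
    + intros <-; split; [now right | intros j Hj; lia].
    + intros [[[Hc _]| ->] _]; [lia|reflexivity].
  - destruct (p 0) eqn:Hp0.
    + split.
      * intros <-; split; [left; split; [lia|exact Hp0] | intros j Hj; lia].
      * intros [_ Hbelow]; destruct c as [|c]; [reflexivity|].
        rewrite Hbelow in Hp0; [discriminate | lia].
    + destruct c as [|c].
      * split; [discriminate|]. intros [[[_ H]|H] _]; congruence.
      * rewrite Nat.succ_inj_wd, IH. split.
        -- intros [Hc Hbelow]; split.
           ++ destruct Hc as [[Hc Hpc]| ->]; [left; split; [lia|exact Hpc] | now right].
           ++ intros [|j] Hj; [exact Hp0 | apply Hbelow; lia].
        -- intros [Hc Hbelow]; split.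
           ++ destruct Hc as [[Hc Hpc]|Hc]; [left; split; [lia|exact Hpc] | right; lia].
           ++ intros j Hj; apply Hbelow; lia.
Qed.

Lemma first_true_eventually (p : nat -> nat -> bool) j0 :
  (forall i, p i j0 = true) ->
  (forall j, j < j0 -> exists m, forall i, m <= i -> p i j = false) ->
  exists N, forall i, N <= i -> first_true (p i) i = j0.
Proof.
  intros Hj0 Hbelow.
  destruct (eventually_all_below (fun j i => p i j = false) Hbelow) as [M HM].
  exists (max (S j0) M); intros i Hi.
  apply first_true_spec; split.
  - left; split; [lia | apply Hj0].
  - apply HM; lia.
Qed.

Lemma clopen_first_true_level (X : Type) (T : topology X) (Q : nat -> X -> Prop) i c :
  (forall j, is_clopen T (Q j)) ->
  is_clopen T (fun x => first_true (fun j => decide (Q j x)) i = c).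
Proof.
  intros HQ.
  apply clopen_ext with (fun x => ((c < i /\ Q c x) \/ c = i) /\ forall j, j < c -> ~ Q j x).
  - apply clopen_and.
    + apply clopen_or; [apply clopen_and; [apply clopen_const | apply HQ] | apply clopen_const].
    + apply clopen_all_lt; intros j; apply clopen_compl, HQ.
  - intros x; rewrite first_true_spec, decide_true; split.
    + intros [Hc Hbelow]; split; [exact Hc|]; intros j Hj; apply decide_false; auto.
    + intros [Hc Hbelow]; split; [exact Hc|]; intros j Hj; apply decide_false; auto.
Qed.

Definition limits_of_continuous_bounded (X : Type) (T : topology X) : Prop :=
  forall Phi : X -> baire,
    (exists g : nat -> X -> baire, (forall i, continuous T (g i)) /\ converges_pointwise g Phi) ->
    bounded (image Phi).

Definition sigma2_clopen (X : Type) (T : topology X) (S : X -> Prop) : Prop :=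
  exists E : nat -> nat -> X -> Prop,
    (forall m i, is_clopen T (E m i)) /\ forall x, S x <-> exists m, forall i, E m i x.

Lemma fst_of_nat_le n : fst (of_nat n) <= n.
Proof.
  rewrite <- (cancel_to_of n) at 2; destruct (of_nat n) as [a b]; cbn [fst].
  pose proof (to_nat_non_decreasing a b); lia.
Qed.

Section BoundedWitnesses.

Variables (X : Type) (T : topology X).
Hypothesis HB : limits_of_continuous_bounded T.

Lemma clopen_witnesses_bounded (E : nat -> nat -> nat -> X -> Prop) :
  (forall n j i, is_clopen T (E n j i)) ->
  (forall x n, exists j, forall i, E n j i x) ->
  exists g : baire, forall x, exists N, forall n, N <= n ->
    exists j, j <= g n /\ forall i, E n j i x.
Proof.
  intros HE Hwit.
  set (Q := fun n j i x => forall i', i' < i -> E n j i' x).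
  set (G := fun i x n => first_true (fun j => decide (Q n j i x)) i).
  destruct (choice (fun (xn : X * nat) j =>
                      (forall i, E (snd xn) j i (fst xn)) /\
                      forall j', j' < j -> ~ forall i, E (snd xn) j' i (fst xn)))
    as [w Hw].
  { intros [x n]; apply classic_least, Hwit. }
  set (f := fun x n => w (x, n)).
  assert (G_continuous : forall i, continuous T (G i)).
  { intros i; apply continuous_of_open_levels; intros n c.
    apply clopen_first_true_level; intros j; apply clopen_all_lt; intros i'; apply HE. }
  assert (G_converges : converges_pointwise G f).
  { intros x n; destruct (Hw (x, n)) as [Hf Hleast]; simpl in Hf, Hleast.
    apply first_true_eventually.
    - intros i; apply decide_true; intros i' _; apply Hf.
    - intros j Hj; destruct (not_all_ex_not _ _ (Hleast j Hj)) as [m Hm].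
      exists (S m); intros i Hi; apply decide_false; intros HQ; apply Hm, HQ; lia. }
  destruct (HB (Phi := f)) as [g Hg]; [now exists G|].
  exists g; intros x.
  destruct (Hg (f x)) as [N HN]; [now exists x|].
  exists N; intros n Hn; exists (f x n); split; [now apply HN | apply (Hw (x, n))].
Qed.

Lemma sigma2_clopen_ext (U V : X -> Prop) :
  sigma2_clopen T U -> (forall x, U x <-> V x) -> sigma2_clopen T V.
Proof.
  intros (E & HE & HU) HUV; exists E; split; [exact HE|].
  intros x; rewrite <- HUV; apply HU.
Qed.

(* Every [m] recurs as [fst (of_nat n)] for arbitrarily large [n], so a bound valid for
   all large [n] bounds the witnesses of every [m]. *)
Lemma sigma2_clopen_inter_union (C : nat -> nat -> X -> Prop) :
  (forall m j, is_clopen T (C m j)) -> sigma2_clopen T (fun x => forall m, exists j, C m j x).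
Proof.
  intros HC.
  set (mm := fun n => fst (of_nat n)).
  destruct (clopen_witnesses_bounded (fun n j i x => C (mm n) j x \/ ~ C (mm n) i x)) as [g Hg].
  - intros n j i; apply clopen_or; [|apply clopen_compl]; apply HC.
  - intros x n; destruct (classic (exists j, C (mm n) j x)) as [[j Hj]|Hnone].
    + exists j; intros i; now left.
    + exists 0; intros i; right; intros Hi; apply Hnone; now exists i.
  - exists (fun N n x => N <= n -> exists j, j < S (g n) /\ C (mm n) j x); split.
    + intros N n; apply clopen_imp; [apply clopen_const | apply clopen_ex_lt, HC].
    + intros x; split.
      * intros Hx; destruct (Hg x) as [N HN]; exists N; intros n Hn.
        destruct (HN n Hn) as (j & Hj & HEj); exists j; split; [lia|].
        destruct (Hx (mm n)) as [j1 Hj1]; destruct (HEj j1); tauto.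
      * intros [N HN] m.
        destruct (HN (to_nat (m, N))) as (j & _ & Hj);
          [pose proof (to_nat_non_decreasing m N); lia|].
        exists j; unfold mm in Hj; now rewrite cancel_of_to in Hj.
Qed.

Lemma sigma2_clopen_compl (U : X -> Prop) :
  sigma2_clopen T U -> sigma2_clopen T (fun x => ~ U x).
Proof.
  intros (E & HE & HU).
  apply sigma2_clopen_ext with (fun x => forall m, exists i, ~ E m i x).
  - apply sigma2_clopen_inter_union; intros m i; apply clopen_compl, HE.
  - intros x; rewrite HU; split.
    + intros Hx [m Hm]; destruct (Hx m) as [i Hi]; exact (Hi (Hm i)).
    + intros Hx m; apply not_all_ex_not; intros Hm; apply Hx; now exists m.
Qed.

Lemma sigma2_clopen_cunion (F : nat -> X -> Prop) :
  (forall n, sigma2_clopen T (F n)) -> sigma2_clopen T (fun x => exists n, F n x).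
Proof.
  intros HF; destruct (choice _ HF) as [E HE].
  exists (fun k i x => E (fst (of_nat k)) (snd (of_nat k)) i x); split.
  - intros k i; apply HE.
  - intros x; split.
    + intros [n Hn]; apply HE in Hn; destruct Hn as [m Hm].
      exists (to_nat (n, m)); now rewrite cancel_of_to.
    + intros [k Hk]; exists (fst (of_nat k)); apply HE; now exists (snd (of_nat k)).
Qed.

Lemma borel_sigma2_clopen (U : X -> Prop) :
  open_countable_union_clopen T -> borel_set T U -> sigma2_clopen T U.
Proof.
  intros HX; induction 1 as [U HU | U _ IH | F _ IH | U V _ IH HUV].
  - destruct (HX U HU) as (C & HC & HCU).
    exists (fun m _ => C m); split; [intros m _; apply HC|].
    intros x; rewrite HCU; split.
    + intros [n Hn]; now exists n.
    + intros [n Hn]; exists n; exact (Hn 0).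
  - now apply sigma2_clopen_compl.
  - now apply sigma2_clopen_cunion.
  - now apply sigma2_clopen_ext with U.
Qed.

Lemma baire_open_level n c : baire_open (fun y => y n = c).
Proof. intros y Hy; exists (S n); intros h Hh; rewrite <- Hh; [exact Hy | lia]. Qed.

Lemma borel_fun_bounded (Psi : X -> baire) :
  open_countable_union_clopen T -> borel_fun T Psi -> bounded (image Psi).
Proof.
  intros HX HPsi.
  assert (Hlev : forall n c, sigma2_clopen T (fun x => Psi x n = c)).
  { intros n c; apply borel_sigma2_clopen; [exact HX|].
    apply (HPsi (fun y => y n = c)), baire_open_level. }
  destruct (choice _ (fun nc : nat * nat => Hlev (fst nc) (snd nc))) as [E HE].
  destruct (clopen_witnesses_bounded
              (fun n j i x => E (n, fst (of_nat j)) (snd (of_nat j)) i x)) as [g Hg].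
  - intros n j i; apply HE.
  - intros x n; destruct (proj1 (proj2 (HE (n, Psi x n)) x) eq_refl) as [m Hm].
    exists (to_nat (Psi x n, m)); now rewrite cancel_of_to.
  - exists g; intros y [x <-]; destruct (Hg x) as [N HN]; exists N; intros n Hn.
    destruct (HN n Hn) as (j & Hj & HEj).
    assert (Psi x n = fst (of_nat j)) as -> by (apply (HE (n, _)); now exists (snd (of_nat j))).
    pose proof (fst_of_nat_le j); lia.
Qed.

End BoundedWitnesses.

Section BorelLevels.

Variables (X : Type) (T : topology X).

Lemma borel_const (P : Prop) : borel_set T (fun _ => P).
Proof. apply borel_open, open_const. Qed.

Lemma borel_all (S : nat -> X -> Prop) :
  (forall i, borel_set T (S i)) -> borel_set T (fun x => forall i, S i x).
Proof.
  intros HS; apply borel_ext with (fun x => ~ exists i, ~ S i x).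
  - apply borel_compl, borel_cunion; intros i; apply borel_compl, HS.
  - intros x; split.
    + intros Hx i; apply NNPP; intros HnS; apply Hx; now exists i.
    + intros Hx [i HnS]; exact (HnS (Hx i)).
Qed.

Lemma borel_and (U V : X -> Prop) :
  borel_set T U -> borel_set T V -> borel_set T (fun x => U x /\ V x).
Proof.
  intros HU HV.
  apply borel_ext with (fun x => forall i, (match i with 0 => U | S _ => V end) x).
  - apply borel_all; intros [|i]; assumption.
  - intros x; split.
    + intros H; exact (conj (H 0) (H 1)).
    + intros [HUx HVx] [|i]; assumption.
Qed.

(* Induction on [k]: a condition on the first [k + 1] coordinates is the countable union,
   over the value [c] of coordinate [k], of a condition on the first [k] coordinates. *)
Lemma borel_preimage_finitary (f : X -> baire) :
  (forall n c, borel_set T (fun x => f x n = c)) ->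
  forall k (P : baire -> Prop), (forall y y', agree_upto k y y' -> P y -> P y') ->
  borel_set T (fun x => P (f x)).
Proof.
  intros Hlev k; induction k as [|k IH]; intros P HP.
  - apply borel_ext with (fun _ => P (fun _ => 0)); [apply borel_const|].
    intros x; split; apply HP; intros i Hi; lia.
  - set (extend := fun (c : nat) (y : baire) i => if i <? k then y i else c).
    assert (Hextend : forall y, agree_upto (S k) y (extend (y k) y)).
    { intros y i Hi; unfold extend; destruct (Nat.ltb_spec i k); [reflexivity|].
      f_equal; lia. }
    apply borel_ext with (fun x => exists c, f x k = c /\ P (extend c (f x))).
    + apply borel_cunion; intros c; apply borel_and; [apply Hlev|].
      apply (IH (fun y => P (extend c y))); intros y y' Hyy' Hy.
      apply HP with (extend c y); [|exact Hy].
      intros i Hi; unfold extend; destruct (Nat.ltb_spec i k); [now apply Hyy' | reflexivity].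
    + intros x; split.
      * intros (c & <- & Hc); apply HP with (extend (f x k) (f x)); [|exact Hc].
        intros i Hi; symmetry; now apply Hextend.
      * intros Hx; exists (f x k); split; [reflexivity|].
        apply HP with (f x); [apply Hextend | exact Hx].
Qed.

Lemma borel_fun_of_borel_levels (f : X -> baire) :
  (forall n c, borel_set T (fun x => f x n = c)) -> borel_fun T f.
Proof.
  intros Hlev U HU.
  apply borel_ext with (fun x => exists k, forall h, agree_upto k (f x) h -> U h).
  - apply borel_cunion; intros k.
    apply (borel_preimage_finitary f Hlev (k := k) (fun y => forall h, agree_upto k y h -> U h)).
    intros y y' Hyy' Hy h Hh; apply Hy; intros i Hi; rewrite Hyy'; auto.
  - intros x; split.
    + intros [k Hk]; apply Hk; intros i Hi; reflexivity.
    + apply HU.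
Qed.

Lemma borel_levels_of_limit (g : nat -> X -> baire) (f : X -> baire) :
  (forall m n c, borel_set T (fun x => g m x n = c)) -> converges_pointwise g f ->
  forall n c, borel_set T (fun x => f x n = c).
Proof.
  intros Hg Hlim n c.
  apply borel_ext with (fun x => exists N, forall i, g (N + i) x n = c).
  - apply borel_cunion; intros N; apply borel_all; intros i; apply Hg.
  - intros x; split.
    + intros [N HN]; destruct (Hlim x n) as [M HM].
      rewrite <- (HM (N + M)) by lia; apply HN.
    + intros <-; destruct (Hlim x n) as [N HN]; exists N; intros i; apply HN; lia.
Qed.

Lemma BaireClass_borel_levels (a : Ord) (f : X -> baire) :
  BaireClass T a f -> forall n c, borel_set T (fun x => f x n = c).
Proof.
  induction 1 as [a f _ Hf | a f b g _ _ _ IH Hlim].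
  - intros n c; apply borel_open, (Hf (fun y => y n = c)), baire_open_level.
  - exact (borel_levels_of_limit IH Hlim).
Qed.

Lemma BaireClassW_borel_fun (alpha : OrdW1) (f : X -> baire) :
  BaireClassW T alpha f -> borel_fun T f.
Proof.
  intros Hf; apply borel_fun_of_borel_levels.
  destruct alpha as [a|]; simpl in Hf.
  - exact (BaireClass_borel_levels Hf).
  - destruct Hf as (b & g & Hg & Hlim).
    apply (borel_levels_of_limit (g := g)); [|exact Hlim].
    intros m; exact (BaireClass_borel_levels (Hg m)).
Qed.

End BorelLevels.

Lemma BaireClassW_of_limit_continuous (X : Type) (T : topology X) (alpha : OrdW1)
  (g : nat -> X -> baire) (f : X -> baire) :
  ordW1_pos alpha -> (forall i, continuous T (g i)) -> converges_pointwise g f ->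
  BaireClassW T alpha f.
Proof.
  intros Halpha Hg Hlim.
  assert (Hg0 : forall i, BaireClass T OZ (g i))
    by (intros i; apply bc_zero; [constructor | apply Hg]).
  destruct alpha as [a|]; simpl in *.
  - now apply bc_lim with (fun _ => OZ) g.
  - now exists (fun _ => OZ), g.
Qed.

Theorem mainTheorem16 (X : Type) (T : topology X)
  (HX : open_countable_union_clopen T)
  (alpha : OrdW1) (Halpha : ordW1_pos alpha) :
  (forall Psi : X -> baire, BaireClassW T alpha Psi -> bounded (image Psi)) <->
  (forall Psi : X -> baire, borel_fun T Psi -> bounded (image Psi)).
Proof.
  split.
  - intros Hbounded Psi HPsi; apply (borel_fun_bounded (T := T)); [|exact HX | exact HPsi].
    intros Phi (g & Hg & Hlim); apply Hbounded.
    now apply BaireClassW_of_limit_continuous with g.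
  - intros Hbounded Psi HPsi; apply Hbounded.
    now apply BaireClassW_borel_fun with alpha.
Qed.
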